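(* Let $S$ be an MPD-semigroup in $\mathbb N^d$ and let $\mathbf f$ be a Frobenius element of $S$. Then there exists a term order $\prec$ on $\mathbb N^d$ such that $\mathbf f=\max_\prec\mathrm{Ap}(S,\mathbf b)-\mathbf b$ for every $\mathbf b\in S\setminus\{0\}$.
   Context: $S$ is generated by finitely many $\mathbf a_1,\dots,\mathbf a_n\in\mathbb N^d$ and is an MPD-semigroup if, for a field $\Bbbk$, the $\Bbbk[x_1,\dots,x_n]$-module $\Bbbk[S]$ (via $x_i\mapsto\chi^{\mathbf a_i}$) has depth $1$. $\mathrm{pos}(S)=\{\sum_i\lambda_i\mathbf a_i:\lambda_i\in\mathbb Q_{\ge0}\}$, $\mathcal H(S)=(\mathrm{pos}(S)\setminus S)\cap\mathbb N^d$. A term order on $\mathbb N^d$ is a total order compatible with addition with $0$ least; $\mathbf f\in\mathcal H(S)$ is a Frobenius element if $\mathbf f=\max_\prec\mathcal H(S)$ for some term order $\prec$. For $\mathbf b\in S\setminus\{0\}$, the Apéry set is $\mathrm{Ap}(S,\mathbf b)=\{\mathbf a\in S: \mathbf a-\mathbf b\in\mathrm{pos}(S)\setminus S\}$. *)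

From HB Require Import structures.
From mathcomp Require Import all_boot all_order all_algebra.
From mathcomp Require Import mpoly.
Set Implicit Arguments. Unset Strict Implicit. Unset Printing Implicit Defensive.
Import Order.TTheory GRing.Theory Num.Theory.
Local Open Scope ring_scope.

Section Semigroup.
Variables (d n : nat) (a : 'I_n -> 'X_{1..d}).

Definition inS (x : 'X_{1..d}) : Prop :=
  exists c : 'I_n -> nat, x = (\sum_(i < n) (a i *+ c i))%MM.

Definition inpos (x : 'X_{1..d}) : Prop :=
  exists lam : 'I_n -> rat, (forall i, 0 <= lam i)%R /\
    forall j : 'I_d, ((x j)%:R : rat) = (\sum_(i < n) lam i * (a i j)%:R)%R.

Definition inH (x : 'X_{1..d}) : Prop := inpos x /\ ~ inS x.

(* Apery set: a in S with a - b in pos(S) \ S  (a - b taken in Z^d) *)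
Definition inAp (b y : 'X_{1..d}) : Prop :=
  inS y /\ exists h, y = (h + b)%MM /\ inpos h /\ ~ inS h.

Definition term_order (le : 'X_{1..d} -> 'X_{1..d} -> Prop) : Prop :=
  [/\ (forall x, le x x) /\ (forall x y, le x y -> le y x -> x = y),
      (forall x y z, le x y -> le y z -> le x z),
      (forall x y, le x y \/ le y x),
      (forall x y z, le x y -> le (x + z)%MM (y + z)%MM) &
      (forall x, le 0%MM x)].

Definition is_max (le : 'X_{1..d} -> 'X_{1..d} -> Prop) (P : 'X_{1..d} -> Prop) x :=
  P x /\ forall y, P y -> le y x.

Definition Frobenius_element (f : 'X_{1..d}) : Prop :=
  exists le, term_order le /\ is_max le inH f.

(* The semigroup ring k[S] inside k[t_1..t_d], as a k[x_1..x_n]-module via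
   x_i |-> t^{a_i}. *)
Variable K : fieldType.

Definition phi (p : {mpoly K[n]}) : {mpoly K[d]} :=
  p \mPo [tuple 'X_[a i] | i < n].

Definition inKS (m : {mpoly K[d]}) : Prop :=
  forall x, x \in msupp m -> inS x.

Definition in_IM (fs : seq {mpoly K[n]}) (m : {mpoly K[d]}) : Prop :=
  exists ms : 'I_(size fs) -> {mpoly K[d]}, (forall i, inKS (ms i)) /\
    m = (\sum_(i < size fs) phi (nth 0 fs i) * ms i)%R.

(* fs is a k[S]-regular sequence in the irrelevant ideal m = (x_1,...,x_n) *)
Definition regular_seq (fs : seq {mpoly K[n]}) : Prop :=
  [/\ (forall i, (i < size fs)%N -> ((nth 0 fs i)@_(0%MM) == 0)%R),
      (forall j, (j < size fs)%N -> forall m, inKS m ->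
          in_IM (take j fs) (phi (nth 0 fs j) * m)%R -> in_IM (take j fs) m) &
      (exists m, inKS m /\ ~ in_IM fs m)].

Definition depth_one : Prop :=
  (exists fs, regular_seq fs /\ size fs = 1%N) /\
  (forall fs, regular_seq fs -> (size fs <= 1)%N).

End Semigroup.

Definition MPD (K : fieldType) d n (a : 'I_n -> 'X_{1..d}) : Prop :=
  depth_one a K.

(* If f is the largest hole for the term order ≺, then for b in S \ {0} the
   element f + b, which lies in pos(S) and satisfies f ≺ f + b, cannot be a
   hole, so it lies in S and hence in Ap(S, b).  Every element of Ap(S, b) is
   h + b with h a hole, and h ⪯ f gives h + b ⪯ f + b. *)
From HB Require Import structures.
From mathcomp Require Import all_boot all_order all_algebra.
From mathcomp Require Import mpoly.
From Stdlib Require Import Classical.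
Set Implicit Arguments. Unset Strict Implicit. Unset Printing Implicit Defensive.
Import Order.TTheory GRing.Theory Num.Theory.

Section PositiveCone.
Variables (d n : nat) (a : 'I_n -> 'X_{1..d}).

Lemma inS_inpos x : inS a x -> inpos a x.
Proof.
case=> c ->; exists (fun i => (c i)%:R : rat); split=> [i|j]; first exact: ler0n.
rewrite mnm_sumE natr_sum; apply: eq_bigr => i _.
by rewrite mulmnE natrM mulrC.
Qed.

Lemma inposD x y : inpos a x -> inpos a y -> inpos a (x + y)%MM.
Proof.
case=> l1 [l1_ge0 e1] [l2 [l2_ge0 e2]]; exists (fun i => l1 i + l2 i)%R; split.
  by move=> i; rewrite addr_ge0.
move=> j; rewrite mnmDE natrD e1 e2 -big_split /=; apply: eq_bigr => i _.
by rewrite mulrDl.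
Qed.

End PositiveCone.

Section TermOrder.
Variables (d : nat) (le : 'X_{1..d} -> 'X_{1..d} -> Prop).
Hypothesis le_term : term_order le.

Lemma term_order_addr x y : le x (x + y)%MM.
Proof.
case: le_term => _ _ _ le_add le0.
by have := le_add _ _ x (le0 y); rewrite add0m addmC.
Qed.

Lemma term_order_addr_eq x y : le (x + y)%MM x -> y = 0%MM.
Proof.
case: le_term => [[_ le_anti]] _ _ _ _ le_xy_x.
apply: (@addmI _ x); rewrite addm0.
by apply: le_anti; last exact: term_order_addr.
Qed.

End TermOrder.

Section Apery.
Variables (d n : nat) (a : 'I_n -> 'X_{1..d}).
Variables (le : 'X_{1..d} -> 'X_{1..d} -> Prop) (f b : 'X_{1..d}).
Hypotheses (le_term : term_order le) (f_max : is_max le (inH a) f).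
Hypotheses (Sb : inS a b) (b_neq0 : b <> 0%MM).

Lemma Frobenius_addS : inS a (f + b)%MM.
Proof.
case: f_max => -[f_pos _] f_ge.
apply: NNPP => fb_notS; apply: b_neq0; apply: (term_order_addr_eq le_term).
by apply: f_ge; split=> //; exact: inposD f_pos (inS_inpos Sb).
Qed.

Lemma Frobenius_Apery_max : is_max le (inAp a b) (f + b)%MM.
Proof.
case: f_max => f_hole f_ge; split.
  by split; [exact: Frobenius_addS | exists f].
move=> _ [_ [h [-> h_hole]]]; case: le_term => _ _ _ le_add _.
exact/le_add/f_ge.
Qed.

End Apery.

Theorem theorem3p6 (K : fieldType) (d n : nat) (a : 'I_n -> 'X_{1..d}) :
  MPD K a ->
  forall f : 'X_{1..d}, Frobenius_element a f ->
  exists le : 'X_{1..d} -> 'X_{1..d} -> Prop,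
    term_order le /\
    forall b : 'X_{1..d}, inS a b -> b <> 0%MM -> is_max le (inAp a b) (f + b)%MM.
Proof.
move=> _ f [le [le_term f_max]].
exists le; split=> // b Sb b_neq0.
exact: Frobenius_Apery_max.
Qed.
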